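(* Let $\mathbf{c}\in\mathbb{R}^n$, $\mathcal{K}=\{1,\dots,K\}$, and for each $k\in\mathcal{K}$ let $\mathcal{F}_k=\bigcup_{i\in\mathcal{D}_k}\mathcal{C}_{ki}$ with $\mathcal{D}_k$ finite and each $\mathcal{C}_{ki}\subset\mathbb{R}^n$ compact and convex. Let $z^*=\min\{\mathbf{c}^\top\mathbf{x}:\mathbf{x}\in\bigcap_{k\in\mathcal{K}}\mathcal{F}_k\}$. Let $\boldsymbol{\lambda}_1,\dots,\boldsymbol{\lambda}_K\in\mathbb{R}^n$ satisfy $\sum_{k\in\mathcal{K}}\boldsymbol{\lambda}_k=\mathbf{c}$. Let $\mathcal{P}=\{\mathcal{J}_1,\dots,\mathcal{J}_P\}$ be a partition of $\mathcal{K}$, let $\mathcal{Q}=\{1,\dots,P\}$, and for $q\in\mathcal{Q}$ let $\mathcal{F}_q'=\bigcap_{k\in\mathcal{J}_q}\mathcal{F}_k$, written in disjunctive normal form as the union of the compact convex sets $\bigcap_{k\in\mathcal{J}_q}\mathcal{C}_{k,i_k}$ over all choices $(i_k)_{k\in\mathcal{J}_q}\in\prod_{k\in\mathcal{J}_q}\mathcal{D}_k$. Define $$z^{HR}_{\mathcal{Q}}=\inf\{\mathbf{c}^\top\mathbf{x}:\ \mathbf{x}=\mathbf{v}_q,\ \mathbf{v}_q\in\operatorname{cl}\operatorname{conv}(\mathcal{F}'_q)\ \forall q\in\mathcal{Q}\},$$ $$z^{LD}_{\mathcal{Q}}=\sup_{\boldsymbol{\mu}_1,\dots,\boldsymbol{\mu}_P\in\mathbb{R}^n}\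 \inf\Big\{\big(\mathbf{c}-\textstyle\sum_q\boldsymbol{\mu}_q\big)^\top\mathbf{x}+\sum_q\boldsymbol{\mu}_q^\top\mathbf{v}_q:\ \mathbf{x}\in\mathbb{R}^n,\ \mathbf{v}_q\in\mathcal{F}'_q\ \forall q\Big\}.$$ Then $$z^*=L_{\{\mathcal{K}\}}\Big(\sum_{k\in\mathcal{K}}\boldsymbol{\lambda}_k\Big)\ \ge\ z^{HR}_{\mathcal{Q}}\ \ge\ z^{LD}_{\mathcal{Q}}\ \ge\ L_{\mathcal{P}}\Big(\sum_{j\in\mathcal{J}_1}\boldsymbol{\lambda}_j,\dots,\sum_{j\in\mathcal{J}_P}\boldsymbol{\lambda}_j\Big)\ \ge\ LR_{\mathcal{K}}(\boldsymbol{\lambda}_1,\dots,\boldsymbol{\lambda}_K),$$ with $z^{HR}_{\mathcal{Q}}=z^{LD}_{\mathcal{Q}}$ if optimal Lagrange multipliers $\boldsymbol{\mu}_1^*,\dots,\boldsymbol{\mu}_P^*$ for the constraints $\mathbf{x}=\mathbf{v}_q$ of the hull relaxation defining $z^{HR}_{\mathcal{Q}}$ exist.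
   Context: $\operatorname{cl}\operatorname{conv}$ is the closed convex hull; minima/infima over the empty set are $+\infty$. The Lagrangian relaxation is $LR_{\mathcal{K}}(\boldsymbol{\lambda}_1,\dots,\boldsymbol{\lambda}_K)=\inf\{(\mathbf{c}-\sum_k\boldsymbol{\lambda}_k)^\top\mathbf{x}+\sum_k\boldsymbol{\lambda}_k^\top\mathbf{v}_k:\mathbf{x}\in\mathbb{R}^n,\ \mathbf{v}_k\in\mathcal{F}_k\ \forall k\}$. For a partition $\mathcal{P}=\{\mathcal{J}_1,\dots,\mathcal{J}_P\}$ of $\mathcal{K}$ and $\boldsymbol{\mu}_p\in\mathbb{R}^n$, the partition relaxation is $L_{\mathcal{P}}(\boldsymbol{\mu}_1,\dots,\boldsymbol{\mu}_P)=\sum_{p=1}^P\min\{\boldsymbol{\mu}_p^\top\mathbf{v}:\mathbf{v}\in\bigcap_{k\in\mathcal{J}_p}\mathcal{F}_k\}$; in particular $L_{\{\mathcal{K}\}}(\boldsymbol{\mu})=\min\{\boldsymbol{\mu}^\top\mathbf{v}:\mathbf{v}\in\bigcap_{k\in\mathcal{K}}\mathcal{F}_k\}$. Optimal Lagrange multipliers $\boldsymbol{\mu}^*_q$ of the hull relaxation means: $z^{HR}_{\mathcal{Q}}$ is finite and equals $\inf\{(\mathbf{c}-\sum_q\boldsymbol{\mu}_q^* )^\top\mathbf{x}+\sum_q\boldsymbol{\mu}_q^{*\top}\mathbf{v}_q:\mathbf{x}\in\mathbb{R}^n,\ \mathbf{v}_q\in\operatorname{cl}\operatorname{conv}(\mathcal{F}'_q)\}$.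 *)

(* Vectors of R^n are row vectors 'rV[R]_n
   over an abstract R : realType; optimal values live in the extended reals. *)
From HB Require Import structures.
From mathcomp Require Import all_boot all_order all_algebra.
From mathcomp Require Import all_classical all_reals all_analysis.
Unset Printing Implicit Defensive.
Import Order.TTheory GRing.Theory Num.Theory.
Import numFieldNormedType.Exports.
Local Open Scope classical_set_scope.
Local Open Scope ring_scope.

Section Defs.
Variables (R : realType) (n : nat).
Local Notation vec := 'rV[R]_n.

Definition dotp (u v : vec) : R := \sum_(i < n) u ord0 i * v ord0 i.

Definition convexR (A : set vec) : Prop :=
  forall x y (t : R), A x -> A y -> 0 <= t -> t <= 1 -> A (t *: x + (1 - t) *: y).

Definition conv_hull (A : set vec) : set vec :=
  \bigcap_(B in [set B | convexR B /\ A `<=` B]) B.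

Definition clconv (A : set vec) : set vec := closure (conv_hull A).

(* min / inf over a set of reals, with inf over the empty set = +oo *)
Definition einf (S : set R) : \bar R := ereal_inf [set x%:E | x in S].

Variables (K : nat) (D : 'I_K -> nat) (C : forall k : 'I_K, 'I_(D k) -> set vec).

Definition Fk (k : 'I_K) : set vec := [set v | exists i : 'I_(D k), C k i v].

Definition Fint (J : {set 'I_K}) : set vec :=
  [set v | forall k, k \in J -> Fk k v].

Definition Lfull (mu : vec) : \bar R :=
  einf [set dotp mu v | v in Fint [set: 'I_K]%SET].

Definition Lpart (P : nat) (J : 'I_P -> {set 'I_K}) (mu : 'I_P -> vec) : \bar R :=
  (\sum_(p < P) einf [set dotp (mu p) v | v in Fint (J p)])%E.

Definition LR (c : vec) (lam : 'I_K -> vec) : \bar R :=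
  einf [set r | exists (x : vec) (v : 'I_K -> vec),
          (forall k, Fk k (v k)) /\
          r = dotp (c - \sum_(k < K) lam k) x + \sum_(k < K) dotp (lam k) (v k)].

Definition zstar (c : vec) : \bar R := einf [set dotp c x | x in Fint [set: 'I_K]%SET].

Definition zHR (c : vec) (P : nat) (J : 'I_P -> {set 'I_K}) : \bar R :=
  einf [set dotp c x | x in [set x | exists v : 'I_P -> vec,
          forall q, x = v q /\ clconv (Fint (J q)) (v q)]].

Definition lagr (c : vec) (P : nat) (G : 'I_P -> set vec) (mu : 'I_P -> vec) : \bar R :=
  einf [set r | exists (x : vec) (v : 'I_P -> vec),
          (forall q, G q (v q)) /\
          r = dotp (c - \sum_(q < P) mu q) x + \sum_(q < P) dotp (mu q) (v q)].

Definition zLD (c : vec) (P : nat) (J : 'I_P -> {set 'I_K}) : \bar R :=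
  ereal_sup [set lagr c P (fun q => Fint (J q)) mu | mu in [set: 'I_P -> vec]].

Definition has_opt_multipliers (c : vec) (P : nat) (J : 'I_P -> {set 'I_K}) : Prop :=
  exists mu : 'I_P -> vec, zHR c P J \is a fin_num /\
    zHR c P J = lagr c P (fun q => clconv (Fint (J q))) mu.

End Defs.

Arguments dotp {R n}.
Arguments convexR {R n}.
Arguments conv_hull {R n}.
Arguments clconv {R n}.
Arguments einf {R}.
Arguments Fk {R n K D}.
Arguments Fint {R n K D}.
Arguments Lfull {R n K D}.
Arguments Lpart {R n K D} C {P}.
Arguments LR {R n K D}.
Arguments zstar {R n K D}.
Arguments zHR {R n K D} C c {P}.
Arguments lagr {R n} c {P}.
Arguments zLD {R n K D} C c {P}.
Arguments has_opt_multipliers {R n K D} C c {P}.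

From HB Require Import structures.
From mathcomp Require Import all_boot all_order all_algebra.
From mathcomp Require Import all_classical all_reals all_analysis.
From mathcomp Require Import lra.
Import Order.TTheory GRing.Theory Num.Theory.
Import numFieldNormedType.Exports.
Local Open Scope classical_set_scope.
Local Open Scope ring_scope.

(* A linear function has the
   same infimum over a set as over its closed convex hull, because every closed
   half-space containing the set contains the hull; so the Lagrangian of the
   hull relaxation does not change when each hull is replaced by the set
   itself.  Evaluating it at a feasible point x = v_q gives z^LD <= z^HR, and
   optimal multipliers give the reverse inequality.  When the multipliers sum
   to c the x-term of a Lagrangian vanishes and it splits into independent
   infima, all finite since each F_k is a finite union of compact sets: for the
   block multipliers sum_{j in J_p} lambda_j this sum is L_P, and decoupling
   every block into copies of its members can only lower the infimum, which
   gives LR <= L_P. *)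

Section Dotp.
Context {R : realType} {n : nat}.
Local Notation vec := 'rV[R]_n.

Lemma dotpBl (u w v : vec) : dotp (u - w) v = dotp u v - dotp w v.
Proof. by rewrite /dotp -sumrB; apply: eq_bigr => i _; rewrite !mxE mulrBl. Qed.

Lemma dotpDr (u w v : vec) : dotp v (u + w) = dotp v u + dotp v w.
Proof. by rewrite /dotp -big_split; apply: eq_bigr => i _; rewrite mxE mulrDr. Qed.

Lemma dotpZr a (u v : vec) : dotp v (a *: u) = a * dotp v u.
Proof. by rewrite /dotp mulr_sumr; apply: eq_bigr => i _; rewrite mxE mulrCA. Qed.

Lemma dotp_suml (I : Type) (s : seq I) (p : pred I) (F : I -> vec) (v : vec) :
  dotp (\sum_(i <- s | p i) F i) v = \sum_(i <- s | p i) dotp (F i) v.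
Proof.
rewrite /dotp exchange_big; apply: eq_bigr => j _.
by rewrite summxE mulr_suml.
Qed.

Lemma dotp_continuous (mu : vec) : continuous (dotp mu).
Proof.
rewrite /dotp; apply: continuous_big => [|i _]; first exact: add_continuous.
move=> v; apply: continuousM; [exact: cst_continuous | exact: coord_continuous].
Qed.

Lemma halfspace_closed (mu : vec) (t : R) : closed [set y | t <= dotp mu y].
Proof.
exact: (continuous_closedP (dotp mu)).1 (@dotp_continuous mu) _ (@closed_ge _ t).
Qed.

Lemma halfspace_convex (mu : vec) (t : R) : convexR [set y | t <= dotp mu y].
Proof. move=> x y s /= hx hy s0 s1; rewrite dotpDr !dotpZr; nra. Qed.

End Dotp.

Section ClosedConvexHull.
Context {R : realType} {n : nat}.
Local Notation vec := 'rV[R]_n.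

Lemma subset_clconv (A : set vec) : A `<=` clconv A.
Proof. by move=> x Ax; apply: subset_closure => B [_]; apply. Qed.

Lemma clconv_sub_closed_convex (A B : set vec) :
  closed B -> convexR B -> A `<=` B -> clconv A `<=` B.
Proof.
move=> clB cvB AB; rewrite [X in _ `<=` X](closure_id B).1 //.
by apply: closureS => x; apply; split.
Qed.

Lemma clconv_dotp_approx (A : set vec) (mu v : vec) (d : R) :
  0 < d -> clconv A v -> exists2 w, A w & dotp mu w <= dotp mu v + d.
Proof.
move=> d0 Av.
have [//|no_approx] := pselect (exists2 w, A w & dotp mu w <= dotp mu v + d).
have A_half : A `<=` [set y | dotp mu v + d <= dotp mu y].
  move=> w Aw /=; rewrite leNgt; apply/negP => lt_w.
  by apply: no_approx; exists w => //; exact: ltW.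
have := clconv_sub_closed_convex A _ (halfspace_closed _ _) (halfspace_convex _ _)
  A_half v Av.
by rewrite /= gerDl leNgt d0.
Qed.

Lemma einf_dotp_neqNy (S B : set vec) (mu : vec) :
  compact B -> S `<=` B -> einf [set dotp mu v | v in S] != -oo%E.
Proof.
move=> cB SB.
have /compact_bounded [M [_ boundM]] :=
  continuous_compact (continuous_subspaceT (dotp_continuous mu)) cB.
have lbS : ((- (`|M| + 1))%:E <= einf [set dotp mu v | v in S])%E.
  apply: le_ereal_inf_tmp => _ [_ [v Sv <-] <-]; rewrite lee_fin.
  have /boundM : M < `|M| + 1 by rewrite (le_lt_trans (ler_norm M)) ?ltrDl.
  move=> /(_ (dotp mu v) (imageP _ (SB _ Sv))) /= normM.
  by rewrite lerNl (le_trans _ normM) // -normrN ler_norm.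
by apply/eqP => hNy; move: lbS; rewrite hNy leeNy_eq.
Qed.

End ClosedConvexHull.

Lemma compact_fin_bigcup {T : topologicalType} {I : finType} (F : I -> set T) :
  (forall i, compact (F i)) -> compact [set x | exists i, F i x].
Proof.
move=> cF; have -> : [set x | exists i, F i x] = \big[setU/set0]_(i <- enum I) F i.
  rewrite -bigcup_seq; apply/seteqP; split => x /= [i]; last by exists i.
  by exists i => //=; rewrite mem_enum.
exact: bigsetU_compact.
Qed.

Section SeparableInfimum.
Context {R : realType} {T : Type} {P : nat}.
Implicit Types (S : 'I_P -> set T) (f : 'I_P -> T -> R).

Lemma sum_le_approx S f (b : 'I_P -> R) :
  (forall q d, 0 < d -> exists2 w, S q w & f q w <= b q + d) ->
  forall e, 0 < e ->
  exists2 w : 'I_P -> T, (forall q, S q (w q)) & \sum_q f q (w q) <= \sum_q b q + e.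
Proof.
move=> approx e e0.
have d0 : 0 < e / P.+1%:R by rewrite divr_gt0 ?ltr0Sn.
have /choice [w hw] : forall q, exists w, S q w /\ f q w <= b q + e / P.+1%:R.
  by move=> q; have [w Sw fw] := approx q _ d0; exists w.
exists w => [q|]; first by case: (hw q).
apply: le_trans (ler_sum _ (fun q _ => proj2 (hw q))) _.
rewrite big_split /= sumr_const card_ord lerD2l -[leLHS]mulr_natr -mulrA.
rewrite ler_piMr ?(ltW e0) //.
by rewrite mulrC ler_pdivrMr ?ltr0Sn // mul1r ler_nat.
Qed.

Lemma einf_sum S f :
  (forall q, einf [set f q v | v in S q] != -oo%E) ->
  einf [set \sum_q f q (w q) | w in [set w | forall q, S q (w q)]] =
  (\sum_q einf [set f q v | v in S q])%E.
Proof.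
move=> einfNy; pose a q := einf [set f q v | v in S q].
have aNy q : a q != -oo%E := einfNy q.
apply/eqP; rewrite eq_le; apply/andP; split; last first.
  apply: le_ereal_inf_tmp => _ [_ [w Sw <-] <-]; rewrite -sumEFin.
  apply: lee_sum => q _; apply: ereal_inf_lbound.
  by exists (f q (w q)) => //; exists (w q).
have [/existsP [q aqy]|/existsPn a_fin] := boolP [exists q, a q == +oo%E].
  have /eqP -> : (\sum_q a q == +oo)%E by rewrite esum_eqy //; apply/existsP; exists q.
  exact: leey.
have {}a_fin q : a q \is a fin_num by rewrite fin_numE aNy a_fin.
apply/lee_addgt0Pr => e e0.
have [|w Sw fw] := sum_le_approx S f (fun q => fine (a q)) _ e e0.
  move=> q d d0; have [_ [_ [v Sv <-] <-] lt_v] := lb_ereal_inf_adherent d0 (a_fin q).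
  by exists v => //; apply/ltW; rewrite -lte_fin EFinD fineK.
apply: le_trans (ereal_inf_lbound _) _.
  by exists (\sum_q f q (w q)) => //; exists w.
by rewrite -(eq_bigr _ (fun q _ => fineK (a_fin q))) sumEFin -EFinD lee_fin.
Qed.

End SeparableInfimum.

Section Lagrangian.
Context {R : realType} {n : nat} (c : 'rV[R]_n) {P : nat}.
Implicit Types (G : 'I_P -> set 'rV[R]_n) (mu : 'I_P -> 'rV[R]_n).

Lemma lagr_le_primal G mu :
  (lagr c G mu <=
   einf [set dotp c x | x in [set x | exists v, forall q, x = v q /\ G q (v q)]])%E.
Proof.
apply: le_ereal_inf_tmp => _ [_ [x [v xv] <-] <-].
apply: ereal_inf_lbound; exists (dotp c x) => //.
exists x, v; split=> [q|]; first by case: (xv q).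
rewrite (eq_bigr (fun q => dotp (mu q) x)) => [|q _]; last by case: (xv q) => <-.
by rewrite -dotp_suml dotpBl subrK.
Qed.

Lemma lagr_clconv G mu : lagr c (fun q => clconv (G q)) mu = lagr c G mu.
Proof.
apply/eqP; rewrite eq_le; apply/andP; split.
  apply: ereal_inf_le_tmp => _ [r [x [v [Gv ->]]] <-]; eexists => //.
  by exists x, v; split => // q; exact: subset_clconv.
apply: le_ereal_inf_tmp => _ [_ [x [v [clGv ->]]] <-].
apply/lee_addgt0Pr => e e0.
have approx q d : 0 < d -> exists2 w, G q w & dotp (mu q) w <= dotp (mu q) (v q) + d.
  by move=> d0; exact: clconv_dotp_approx d0 (clGv q).
have [w Gw le_w] := sum_le_approx _ _ _ approx e e0.
apply: le_trans (ereal_inf_lbound _) _.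
  by exists (dotp (c - \sum_q mu q) x + \sum_q dotp (mu q) (w q)) => //; exists x, w.
by rewrite -EFinD lee_fin -addrA lerD2l.
Qed.

Lemma lagr_balanced G mu : \sum_q mu q = c ->
  lagr c G mu = einf [set \sum_q dotp (mu q) (v q) | v in [set v | forall q, G q (v q)]].
Proof.
move=> sum_mu; rewrite /lagr /einf; congr (ereal_inf [set _%:E | _ in _]).
apply/seteqP; split => r /=.
  by move=> [x [v [Gv ->]]]; exists v => //; rewrite sum_mu dotpBl subrr add0r.
by move=> [v Gv <-]; exists 0, v; split => //; rewrite sum_mu dotpBl subrr add0r.
Qed.

End Lagrangian.

Section Partition.
Context {K P : nat} {J : 'I_P -> {set 'I_K}}.
Hypotheses (J_disj : forall q q' k, k \in J q -> k \in J q' -> q = q')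
           (J_cover : forall k, exists q, k \in J q).

Definition block (k : 'I_K) : 'I_P := xchoose (J_cover k).

Lemma block_eq k q : (block k == q) = (k \in J q).
Proof.
have k_block : k \in J (block k) := xchooseP (J_cover k).
by apply/eqP/idP => [<- //|kJ]; exact: J_disj k_block kJ.
Qed.

Lemma sum_partition (V : zmodType) (F : 'I_K -> V) :
  \sum_k F k = \sum_q \sum_(k | k \in J q) F k.
Proof.
rewrite (partition_big block predT) //; apply: eq_bigr => q _.
by apply: eq_bigl => k; rewrite block_eq.
Qed.

End Partition.

Section Relaxations.
Context {R : realType} {n K : nat} {D : 'I_K -> nat}.
Variable C : forall k : 'I_K, 'I_(D k) -> set 'rV[R]_n.

Lemma zHR_le_zstar (c : 'rV[R]_n) {P : nat} (J : 'I_P -> {set 'I_K}) :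
  (zHR C c J <= zstar C c)%E.
Proof.
apply: le_ereal_inf_tmp => _ [_ [x Fx <-] <-].
apply: ereal_inf_lbound; exists (dotp c x) => //; exists x => //.
by exists (fun=> x) => q; split => //; apply: subset_clconv => k _; exact: Fx.
Qed.

Lemma einf_Fint_neqNy (J : {set 'I_K}) (mu : 'rV[R]_n) :
  (forall k i, compact (C k i)) -> (0 < #|J|)%N ->
  einf [set dotp mu v | v in Fint C J] != -oo%E.
Proof.
move=> cC /card_gt0P [k kJ].
apply: (einf_dotp_neqNy _ _ mu (compact_fin_bigcup _ (cC k))).
by move=> v; apply.
Qed.

Lemma einf_decoupled_le_blocks {P : nat} (J : 'I_P -> {set 'I_K})
    (J_disj : forall q q' k, k \in J q -> k \in J q' -> q = q')
    (J_cover : forall k, exists q, k \in J q) (lam : 'I_K -> 'rV[R]_n) :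
  (einf [set (\sum_k dotp (lam k) (v k))%R | v in [set v | forall k, Fk C k (v k)]] <=
   einf [set (\sum_q dotp (\sum_(k | k \in J q) lam k) (w q))%R
         | w in [set w | forall q, Fint C (J q) (w q)]])%E.
Proof.
have block_eq := block_eq J_disj J_cover.
apply: ereal_inf_le_tmp => _ [_ [w Fw <-] <-]; eexists => //.
exists (fun k => w (block J_cover k)) => [k|]; first by apply: Fw; rewrite -block_eq.
rewrite (sum_partition J_disj J_cover); apply: eq_bigr => q _.
by rewrite dotp_suml; apply: eq_bigr => k; rewrite -block_eq => /eqP ->.
Qed.

End Relaxations.

Theorem corollary2 (R : realType) (n K : nat) (c : 'rV[R]_n)
  (D : 'I_K -> nat) (C : forall k : 'I_K, 'I_(D k) -> set 'rV[R]_n)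
  (hCcomp : forall k i, compact (C k i))
  (hCconv : forall k i, convexR (C k i))
  (lam : 'I_K -> 'rV[R]_n) (hlam : \sum_(k < K) lam k = c)
  (P : nat) (J : 'I_P -> {set 'I_K})
  (hJne : forall q, (0 < #|J q|)%N)
  (hJdisj : forall q q' k, k \in J q -> k \in J q' -> q = q')
  (hJcov : forall k, exists q, k \in J q) :
  let mu_P := fun q : 'I_P => \sum_(j < K | j \in J q) lam j in
  zstar C c = Lfull C (\sum_(k < K) lam k) /\
  (zHR C c J <= Lfull C (\sum_(k < K) lam k))%E /\
  (zLD C c J <= zHR C c J)%E /\
  (Lpart C J mu_P <= zLD C c J)%E /\
  (LR C c lam <= Lpart C J mu_P)%E /\
  (has_opt_multipliers C c J -> zHR C c J = zLD C c J).
Proof.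
move=> mu_P.
have sum_mu : \sum_q mu_P q = c by rewrite -hlam (sum_partition hJdisj hJcov).
have Lpart_lagr : Lpart C J mu_P = lagr c (fun q => Fint C (J q)) mu_P.
  rewrite lagr_balanced //; apply/esym/(einf_sum _ (fun q => dotp (mu_P q))) => q.
  exact: einf_Fint_neqNy.
have zLD_le_zHR : (zLD C c J <= zHR C c J)%E.
  by apply: ge_ereal_sup => _ [mu _ <-]; rewrite -lagr_clconv; exact: lagr_le_primal.
split; first by rewrite hlam.
split; first by rewrite hlam; exact: zHR_le_zstar.
split; first exact: zLD_le_zHR.
split; first by rewrite Lpart_lagr; apply: ereal_sup_ubound; exists mu_P.
split.
  rewrite Lpart_lagr -[LR C c lam]/(lagr c (Fk C) lam) !lagr_balanced //.
  exact: einf_decoupled_le_blocks.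
move=> [mu [_ zHR_eq]]; apply/eqP; rewrite eq_le zLD_le_zHR andbT zHR_eq lagr_clconv.
by apply: ereal_sup_ubound; exists mu.
Qed.
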